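(* Let $\mathbb{F}$ be a finite field of cardinality $2^m$ with $m\geq 2$, and let $A\in M_n(\mathbb{F})$. Then there exist $N,D\in M_n(\mathbb{F})$ with $A=N+D$, $N^2=0$ and $D^{2^m}=D$. *)

From mathcomp Require Import all_boot all_algebra.
Set Implicit Arguments. Unset Strict Implicit. Unset Printing Implicit Defensive.
Import GRing.Theory.
Local Open Scope ring_scope.

(* Power of a square matrix of arbitrary size n (including n = 0, where
   'M_n has no ring structure): D ^ k = D *m ... *m D (k factors), D ^ 0 = 1. *)
Definition mxpow (R : pzRingType) (n : nat) (D : 'M[R]_n) (k : nat) : 'M[R]_n :=
  iter k (mulmx D) 1%:M.

From mathcomp Require Import all_boot all_algebra perm finfield.
Set Implicit Arguments. Unset Strict Implicit. Unset Printing Implicit Defensive.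
Import GRing.Theory.
Local Open Scope ring_scope.

(* Every square matrix is similar to a block diagonal matrix of cyclic blocks:
   a Krylov space W of maximal dimension k is A-stable, some Krylov space of
   A^T of dimension k pairs nondegenerately with W, and its annihilator is an
   A-stable complement of W.  A cyclic block is similar to the lower Hessenberg
   matrix H with rows d_i e_i + e_(i+1) (i < k - 1) and last row w, for any
   prescribed d; only the trace, hence the last diagonal entry of H, is forced.
   Let N keep the superdiagonal entries of the odd rows of H, together with the
   even-column entries of the last row when its index is odd.  Then N^2 = 0,
   and each e_i is killed by a product of linear factors X - x evaluated at
   D = H - N.  Since |F| >= 4, d can be chosen to make these factors distinct,
   whence D^|F| = D.  The one exception is a 2 x 2 block of trace 0: it squares
   to a scalar s^2 (squaring is onto in characteristic 2), so H + s is
   square-zero. *)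

Definition sqz_potent (R : pzRingType) (q n : nat) (A : 'M[R]_n) :=
  exists N D : 'M[R]_n, [/\ A = N + D, N *m N = 0 & mxpow D q = D].

Lemma mxpowE (R : pzRingType) n (D : 'M[R]_n.+1) j : mxpow D j = D ^+ j.
Proof. by elim: j => [|j /= ->]; rewrite ?exprS. Qed.

Section SqzPotentClosure.
Variables (R : pzRingType) (q : nat).

Lemma sqz_potent0 (A : 'M[R]_0) : sqz_potent q A.
Proof. by exists 0, 0; split; rewrite ?mul0mx; apply/matrixP => -[]. Qed.

Lemma sqz_potent_block m n (B : 'M[R]_m) (C : 'M[R]_n) :
  sqz_potent q B -> sqz_potent q C -> sqz_potent q (block_mx B 0 0 C).
Proof.
move=> [N1 [D1 [-> N1N1 D1q]]] [N2 [D2 [-> N2N2 D2q]]].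
have mxpow_block j :
    mxpow (block_mx D1 0 0 D2) j = block_mx (mxpow D1 j) 0 0 (mxpow D2 j).
  elim: j => [|j /= ->]; first by rewrite /= scalar_mx_block.
  by rewrite mulmx_block !mulmx0 !mul0mx !addr0 !add0r.
exists (block_mx N1 0 0 N2), (block_mx D1 0 0 D2); split.
- by rewrite add_block_mx !addr0.
- by rewrite mulmx_block !mulmx0 !mul0mx !addr0 !add0r N1N1 N2N2 block_mx0.
- by rewrite mxpow_block D1q D2q.
Qed.

End SqzPotentClosure.

Lemma sqz_potent_conj (F : fieldType) q m n (P : 'M[F]_(m, n)) A B :
  row_free P -> row_full P -> P *m A = B *m P ->
  sqz_potent q B -> sqz_potent q A.
Proof.
set Q := pinvmx P => Pfree Pfull PA [N [D [BE NN Dq]]].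
have PQ : P *m Q = 1%:M := mulmxVp Pfree.
have QP : Q *m P = 1%:M by have := mulmxKpV (submx_full 1%:M Pfull); rewrite mul1mx.
clearbody Q.
have conjM (X Y : 'M_m) : Q *m X *m P *m (Q *m Y *m P) = Q *m (X *m Y) *m P.
  by rewrite !mulmxA -(mulmxA _ P Q) PQ mulmx1.
have mxpow_conj X j : mxpow (Q *m X *m P) j = Q *m mxpow X j *m P.
  by elim: j => [|j /= ->]; rewrite ?mulmx1 ?QP ?conjM.
exists (Q *m N *m P), (Q *m D *m P); split.
- by rewrite -mulmxDl -mulmxDr -BE -mulmxA -PA mulmxA QP mul1mx.
- by rewrite conjM NN mulmx0 mul0mx.
- by rewrite mxpow_conj Dq.
Qed.

Section Krylov.
Variable F : fieldType.

Definition krylovmx n (A : 'M[F]_n.+1) (v : 'rV_n.+1) k : 'M_(k, n.+1) :=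
  \matrix_(i < k) (v *m A ^+ i).

Lemma krylovmxS n (A : 'M[F]_n.+1) v k :
  (krylovmx A v k.+1 :=: krylovmx A v k + v *m A ^+ k)%MS.
Proof.
apply/eqmxP/andP; split.
  apply/row_subP=> i; rewrite rowK; have [ik|ki] := ltnP i k.
    have := row_sub (Ordinal ik) (krylovmx A v k); rewrite rowK => /submx_trans.
    by apply; apply: addsmxSl.
  have -> : (i : nat) = k by apply/eqP; rewrite eqn_leq ki -ltnS ltn_ord.
  exact: addsmxSr.
rewrite addsmx_sub; apply/andP; split.
  apply/row_subP=> i; rewrite rowK.
  by have := row_sub (widen_ord (leqnSn k) i) (krylovmx A v k.+1); rewrite rowK.
by have := row_sub ord_max (krylovmx A v k.+1); rewrite rowK.
Qed.

Lemma krylovmx_stable n (A : 'M[F]_n.+1) v k :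
  row_free (krylovmx A v k) -> ~~ row_free (krylovmx A v k.+1) ->
  stablemx (krylovmx A v k) A.
Proof.
move=> Kfree; apply: contraNT => unstable.
have vAk_notin : ~~ (v *m A ^+ k <= krylovmx A v k)%MS.
  apply: contra unstable => vAk_in; apply/row_subP=> i.
  rewrite row_mul rowK -mulmxA mulmxE -exprSr; have [ik|ki] := ltnP i.+1 k.
    by have := row_sub (Ordinal ik) (krylovmx A v k); rewrite rowK.
  by have -> : i.+1 = k by apply/eqP; rewrite eqn_leq ki ltn_ord.
have lt_K_KvAk : (krylovmx A v k < krylovmx A v k + v *m A ^+ k)%MS.
  by rewrite ltmxE addsmxSl addsmx_sub submx_refl.
by rewrite -row_leq_rank (krylovmxS A v k) -{1}(eqP Kfree) rank_ltmx.
Qed.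

Lemma trmxX n (A : 'M[F]_n.+1) j : (A ^+ j)^T = A^T ^+ j.
Proof.
elim: j => [|j IHj]; first by rewrite !expr0 trmx1.
by rewrite exprS exprSr -IHj -!mulmxE trmx_mul.
Qed.

(* For K c = e_k, the entries v A^(i+j) c of the product form a Hankel matrix
   that is zero above its anti-diagonal and 1 on it. *)
Lemma krylovmx_dual n (A : 'M[F]_n.+1) v k :
  row_free (krylovmx A v k.+1) ->
  exists f, krylovmx A v k.+1 *m (krylovmx A^T f k.+1)^T \in unitmx.
Proof.
set K := krylovmx A v k.+1 => Kfree; have [X KX] := row_freeP Kfree.
pose c : 'cV_n.+1 := X *m delta_mx ord_max 0; exists c^T; set M := _ *m _.
have ME i j : M i j = (v *m A ^+ (i + j) *m c) 0 0.
  rewrite exprD -mulmxE mulmxA -(mulmxA _ (A ^+ j) c) [LHS]mxE [RHS]mxE.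
  apply: eq_bigr => l _; rewrite [K i l]mxE; congr (_ * _).
  by rewrite [LHS]mxE /krylovmx [LHS]mxE -trmxX -trmx_mul mxE.
have vAc i : (i <= k)%N -> (v *m A ^+ i *m c) 0 0 = (i == k)%:R.
  rewrite -ltnS => ik; have Kc : K *m c = delta_mx ord_max 0 by rewrite mulmxA KX mul1mx.
  by rewrite -(rowK (fun i : 'I_k.+1 => v *m A ^+ i) (Ordinal ik)) -row_mul Kc !mxE andbT.
pose M' := col_perm (perm (@rev_ord_inj k.+1)) M.
have M'E (i j : 'I_k.+1) : (i <= j)%N -> M' i j = (i == j :> nat)%:R.
  move=> ij; have jk : (j <= k)%N by rewrite -ltnS.
  rewrite mxE permE ME /= subSS vAc; last first.
    by rewrite -[X in (_ <= X)%N](subnKC jk) leq_add2r.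
  by rewrite -[X in _ == X](subnKC jk) eqn_add2r.
suff : M' \in unitmx by rewrite /M' col_permE unitmx_mul => /andP[].
rewrite unitmxE det_trig; last first.
  by apply/is_trig_mxP=> i j ij; rewrite M'E ?(ltnW ij) // ltn_eqF.
by rewrite big1 ?unitr1 // => i _; rewrite M'E ?eqxx.
Qed.

Lemma unitmx_mul_row_free m n (X : 'M[F]_(m, n)) (Z : 'M_(n, m)) :
  X *m Z \in unitmx -> row_free X /\ row_free Z^T.
Proof.
move=> XZu; rewrite -!row_leq_rank mxrank_tr.
by split; rewrite -[m in (m <= _)%N](mxrank_unit XZu) ?mxrankM_maxl ?mxrankM_maxr.
Qed.

Lemma stablemx_kermx m n (A : 'M[F]_n) (Y : 'M_(n, m)) :
  stablemx Y^T A^T -> stablemx (kermx Y) A.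
Proof.
case/submxP=> C YAC; apply/sub_kermxP.
by rewrite -mulmxA -[A *m Y]trmxK trmx_mul YAC trmx_mul trmxK mulmxA mulmx_ker mul0mx.
Qed.

Lemma krylovmx_complement n (A : 'M[F]_n.+1) v k' :
  row_free (krylovmx A v k'.+1) -> (forall u, ~~ row_free (krylovmx A u k'.+2)) ->
  exists2 Y : 'M_(n.+1, k'.+1),
    krylovmx A v k'.+1 *m Y \in unitmx & stablemx (kermx Y) A.
Proof.
move=> Wfree Wmax; have [f WYu] := krylovmx_dual Wfree.
exists (krylovmx A^T f k'.+1)^T => //.
apply: stablemx_kermx; rewrite trmxK; apply: krylovmx_stable.
  by case: (unitmx_mul_row_free WYu); rewrite trmxK.
(* A longer free Krylov chain of A^T would, dually, give one of A. *)
apply/negP=> /krylovmx_dual[g /unitmx_mul_row_free[_]].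
by rewrite !trmxK; apply/negP.
Qed.

Lemma row_free_col_mx m1 m2 n (X : 'M[F]_(m1, n)) (B : 'M_(m2, n)) (Y : 'M_(n, m1)) :
  X *m Y \in unitmx -> B *m Y = 0 -> row_free B -> row_free (col_mx X B).
Proof.
move=> XYu BY0 Bfree; apply/inj_row_free=> u; rewrite -[u]hsubmxK mul_row_col => uXB0.
have ul0 : lsubmx u = 0.
  move/(congr1 (mulmx^~ Y)): uXB0; rewrite mul0mx mulmxDl -!mulmxA BY0 mulmx0 addr0.
  by move/eqP; rewrite mulmx_free_eq0 ?row_free_unit // => /eqP.
move: uXB0; rewrite ul0 mul0mx add0r => /eqP; rewrite mulmx_free_eq0 // => /eqP->.
by rewrite row_mx0.
Qed.

Lemma krylovmx_conj m n (A : 'M[F]_n.+1) (C : 'M_m.+1) (W : 'M_(m.+1, n.+1)) u k :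
  C *m W = W *m A -> krylovmx C u k *m W = krylovmx A (u *m W) k.
Proof.
move=> CW; have CiW i : C ^+ i *m W = W *m A ^+ i.
  elim: i => [|i IHi]; first by rewrite !expr0 mul1mx mulmx1.
  by rewrite !exprS -!mulmxE -mulmxA IHi !mulmxA CW.
by apply/row_matrixP=> i; rewrite row_mul !rowK -mulmxA CiW mulmxA.
Qed.

Lemma conjmx_krylovmx_free n (A : 'M[F]_n.+1) v k' :
  row_free (krylovmx A v k'.+1) -> stablemx (krylovmx A v k'.+1) A ->
  row_free (krylovmx (conjmx (krylovmx A v k'.+1) A) (delta_mx 0 0) k'.+1).
Proof.
set W := krylovmx A v k'.+1 => Wfree Wstab.
have KW : krylovmx (conjmx W A) (delta_mx 0 0) k'.+1 *m W = W.
  by rewrite (krylovmx_conj _ _ (mulmxKpV Wstab)) -rowE rowK expr0 mulmx1.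
by rewrite -row_leq_rank -{1}(eqP Wfree) -{1}KW mxrankM_maxl.
Qed.

End Krylov.

Section CyclicDecomposition.
Variable F : finFieldType.

Lemma exists_max_krylovmx n (A : 'M[F]_n.+1) :
  exists k' v, row_free (krylovmx A v k'.+1) /\
               forall u, ~~ row_free (krylovmx A u k'.+2).
Proof.
pose P k := [exists v, row_free (krylovmx A v k)].
have P1 : P 1%N.
  apply/existsP; exists (delta_mx 0 0); rewrite /row_free rank_rV.
  suff -> : krylovmx A (delta_mx 0 0) 1 != 0 by [].
  apply/eqP=> /matrixP/(_ 0 0); rewrite mxE expr0 mulmx1 !mxE /= => /eqP.
  by rewrite oner_eq0.
have Pbound k : P k -> (k <= n.+1)%N by case/existsP=> v /eqP <-; apply: rank_leq_col.
case: (ex_maxnP (ex_intro _ 1%N P1) Pbound) => -[|k'] /existsP[v vfree] Pmax.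
  by have := Pmax 1%N P1.
exists k', v; split=> // u; apply/negP=> ufree.
by have := Pmax k'.+2 (introT existsP (ex_intro _ u ufree)); rewrite ltnn.
Qed.

Lemma cyclic_decomposition_ind (Pr : forall n, 'M[F]_n -> Prop) :
  (forall A : 'M[F]_0, Pr 0%N A) ->
  (forall k' (C : 'M[F]_k'.+1) u, row_free (krylovmx C u k'.+1) -> Pr _ C) ->
  (forall m n (B : 'M[F]_m) (C : 'M[F]_n), Pr _ B -> Pr _ C -> Pr _ (block_mx B 0 0 C)) ->
  (forall m n (P : 'M[F]_(m, n)) A B,
     row_free P -> row_full P -> P *m A = B *m P -> Pr _ B -> Pr _ A) ->
  forall n (A : 'M[F]_n), Pr _ A.
Proof.
move=> Pr0 Pr_cyclic Pr_block Pr_conj n; elim/ltn_ind: n => -[|n] IHn A; first exact: Pr0.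
have [k' [v [Wfree Wmax]]] := exists_max_krylovmx A; set W := krylovmx A v k'.+1 in Wfree.
have Wstab : stablemx W A := krylovmx_stable Wfree (Wmax v).
have [Y WYu Ystab] := krylovmx_complement Wfree Wmax.
have rankU : \rank (kermx Y) = (n - k')%N.
  have [_] := unitmx_mul_row_free WYu.
  by rewrite mxrank_ker /row_free mxrank_tr => /eqP->.
pose P := col_mx W (row_base (kermx Y)).
have PA : P *m A = block_mx (conjmx W A) 0 0 (restrictmx (kermx Y) A) *m P.
  by rewrite mul_col_mx mul_block_col !mul0mx addr0 add0r !mulmxKpV ?stablemx_row_base.
have Pfree : row_free P.
  apply: row_free_col_mx WYu _ (row_base_free _).
  by apply/sub_kermxP; rewrite eq_row_base.
apply: (Pr_conj _ _ P _ _ Pfree _ PA).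
  rewrite -col_leq_rank (eqP Pfree) rankU addSn ltnS subnKC //.
  by rewrite -ltnS -(eqP Wfree) rank_leq_col.
apply: Pr_block; first exact: Pr_cyclic (conjmx_krylovmx_free Wfree Wstab).
by apply: IHn; rewrite rankU ltnS leq_subr.
Qed.

End CyclicDecomposition.

Section Hessenberg.
Variables (F : fieldType) (k' : nat).
Local Notation k := k'.+1.
Local Notation e i := (delta_mx 0 i : 'rV[F]_k).

Definition hessmx (d : nat -> F) (w : 'rV[F]_k) : 'M[F]_k :=
  \matrix_(i, j) if i == ord_max then w 0 j
                 else d i * (i == j)%:R + (i.+1 == j :> nat)%:R.

Definition nilmx (w : 'rV[F]_k) : 'M[F]_k :=
  \matrix_(i, j) if odd i && ~~ odd j then
                   (if i == ord_max then w 0 j else (i.+1 == j :> nat)%:R)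
                 else 0.

Lemma nilmx_sqr w : nilmx w *m nilmx w = 0.
Proof.
apply/matrixP=> i j; rewrite !mxE; apply: big1 => l _; rewrite !mxE.
by case: (odd l); rewrite ?andbF ?mulr0 ?mul0r.
Qed.

Lemma hessmx_sqz_potent q d w :
  mxpow (hessmx d w - nilmx w) q = hessmx d w - nilmx w -> sqz_potent q (hessmx d w).
Proof. by exists (nilmx w), (hessmx d w - nilmx w); rewrite addrC subrK nilmx_sqr. Qed.

Lemma ord_lt_max (i : 'I_k) : i != ord_max -> (i < k')%N.
Proof.
move=> ni; have := ltn_ord i; rewrite ltnS leq_eqVlt => /predU1P[ik|//].
by case/eqP: ni; apply: val_inj.
Qed.

Lemma eq_ord_maxF (i : 'I_k) : (i < k')%N -> (i == ord_max) = false.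
Proof. by move=> ik; rewrite -val_eqE /= ltn_eqF. Qed.

Lemma eq_inordS (i j : 'I_k) : (i < k')%N -> (j == inord i.+1) = (i.+1 == j :> nat).
Proof. by move=> ik; rewrite eq_sym -val_eqE /= inordK. Qed.

Lemma row_hessmx d w (i : 'I_k) : (i < k')%N ->
  row i (hessmx d w) = d i *: e i + e (inord i.+1).
Proof. by move=> ik; apply/rowP=> j; rewrite !mxE eq_inordS // eq_ord_maxF // eq_sym. Qed.

Lemma row_hessmx_max d w : row ord_max (hessmx d w) = w.
Proof. by apply/rowP=> j; rewrite !mxE eqxx. Qed.

Lemma row_nilmx w (i : 'I_k) : (i < k')%N ->
  row i (nilmx w) = if odd i then e (inord i.+1) else 0.
Proof.
move=> ik; apply/rowP=> j; rewrite !mxE eq_ord_maxF //.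
case: (boolP (odd i)) => oi; rewrite !mxE ?eq_inordS //= eq_sym.
by case: eqP => [->|_]; rewrite ?if_same //= oi.
Qed.

Lemma mxtrace_hessmx d w : \tr (hessmx d w) = \sum_(i < k') d i + w 0 ord_max.
Proof.
rewrite /mxtrace big_ord_recr !mxE eqxx; congr (_ + _); apply: eq_bigr => i _.
by rewrite !mxE eq_ord_maxF //= eqxx mulr1 eqn_leq ltnn addr0.
Qed.

Section PotentPart.
Variables (d : nat -> F) (w : 'rV[F]_k).
Local Notation D := (hessmx d w - nilmx w).

Lemma potent_part_sub_diag (i : 'I_k) : (i < k')%N ->
  e i *m (D - (d i)%:M) = if odd i then 0 else e (inord i.+1).
Proof.
move=> ik; rewrite mulmxBr mul_mx_scalar -rowE linearB /= row_hessmx // row_nilmx //.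
by rewrite addrAC [d i *: _ + _]addrC addrK; case: ifP; rewrite ?subrr ?subr0.
Qed.

Lemma potent_part_sub_last :
  e ord_max *m (D - (w 0 ord_max)%:M) =
  \row_j (if (j == ord_max) || odd k' && ~~ odd j then 0 else w 0 j).
Proof.
rewrite mulmxBr mul_mx_scalar -rowE linearB /= row_hessmx_max.
apply/rowP=> j; rewrite !mxE !eqxx /=.
case: eqP => [->|_] /=; first by rewrite andbN subr0 mulr1 subrr.
by case: (odd k' && _); rewrite ?subrr ?mulr0 ?subr0.
Qed.

End PotentPart.

Definition hess_poly (d : nat -> F) i : {poly F} := \prod_(0 <= j < i) ('X - (d j)%:P).

Lemma size_hess_poly d i : size (hess_poly d i) = i.+1.
Proof. by rewrite size_prod_XsubC size_iota subn0. Qed.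

Lemma hess_polySX d i : hess_poly d i * 'X = hess_poly d i.+1 + d i *: hess_poly d i.
Proof. by rewrite /hess_poly big_nat_recr //= mulrBr -mul_polyC [_%:P * _]mulrC subrK. Qed.

Lemma horner_mx_wide (C : 'M[F]_k) (p : {poly F}) m :
  (size p <= m)%N -> horner_mx C p = \sum_(j < m) p`_j *: C ^+ j.
Proof.
move=> pm; rewrite -[p in LHS](take_poly_id pm) /take_poly poly_def linear_sum /=.
by apply: eq_bigr => j _; rewrite linearZ rmorphXn /= horner_mx_X.
Qed.

Lemma hessmx_similar (C : 'M[F]_k) u d :
  row_free (krylovmx C u k) ->
  exists w (T : 'M_k), T \in unitmx /\ T *m C = hessmx d w *m T.
Proof.
move=> Kfree; pose T := \matrix_(i < k) (u *m horner_mx C (hess_poly d i)).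
have Tunit : T \in unitmx.
  pose Tc := \matrix_(i, j < k) (hess_poly d i)`_j.
  have -> : T = Tc *m krylovmx C u k.
    apply/row_matrixP=> i; rewrite row_mul mulmx_sum_row rowK (horner_mx_wide _ (m := k)).
      by rewrite mulmx_sumr; apply: eq_bigr => j _; rewrite !mxE rowK scalemxAr.
    by rewrite size_hess_poly.
  rewrite unitmx_mul -[krylovmx _ _ _ \in _]row_free_unit Kfree andbT unitmxE det_trig.
    rewrite big1 ?unitr1 // => i _; rewrite mxE.
    have /monicP := monic_prod_XsubC (index_iota 0 i) xpredT d.
    by rewrite /lead_coef size_hess_poly.
  by apply/is_trig_mxP=> i j ij; rewrite mxE nth_default // size_hess_poly.
exists (row ord_max (T *m C) *m invmx T), T; split=> //.
apply/row_matrixP=> i; rewrite [RHS]row_mul.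
have [->|/ord_lt_max ik] := eqVneq i ord_max; first by rewrite row_hessmx_max mulmxKV.
rewrite row_hessmx // mulmxDl -scalemxAl -!rowE row_mul !rowK inordK //.
rewrite -mulmxA mulmxE -{2}(horner_mx_X C) -rmorphM hess_polySX.
by rewrite rmorphD /= horner_mxZ mulmxDr -scalemxAr addrC.
Qed.

End Hessenberg.

Notation kerprod D s := (kermxpoly D (\prod_(x <- s) ('X - x%:P))).

Section KernelProd.
Variables (F : fieldType) (n : nat) (D : 'M[F]_n.+1).

Lemma kermxpoly_dvdp p r : p %| r -> (kermxpoly D p <= kermxpoly D r)%MS.
Proof.
case/dvdpP=> c ->; apply/sub_kermxP; rewrite rmorphM /= comm_horner_mx2.
by rewrite mulmxE mulrA -mulmxE mulmx_ker mul0mx.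
Qed.

Lemma kerprod_cons x s (u : 'rV_n.+1) :
  (u *m (D - x%:M) <= kerprod D s)%MS -> (u <= kerprod D (x :: s))%MS.
Proof.
rewrite /kermxpoly big_cons rmorphM rmorphB /= horner_mx_X horner_mx_C.
by move=> /sub_kermxP uDs; apply/sub_kermxP; rewrite -mulmxE mulmxA.
Qed.

Lemma sub_kerprod_cons x s (u : 'rV_n.+1) :
  (u <= kerprod D s)%MS -> (u <= kerprod D (x :: s))%MS.
Proof. by move/submx_trans; apply; rewrite kermxpoly_dvdp // big_cons dvdp_mull. Qed.

Lemma kerprod_comb s (y : 'rV_n.+1) :
  (forall j, y 0 j = 0 \/ ((delta_mx 0 j : 'rV_n.+1) <= kerprod D s)%MS) ->
  (y <= kerprod D s)%MS.
Proof.
move=> ys; rewrite -[y]mulmx1 mulmx_sum_row; apply: summx_sub => j _.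
by case: (ys j) => [->|js]; rewrite ?scale0r ?sub0mx // scalemx_sub // rowE mulmx1.
Qed.

End KernelProd.

Section PotentCriterion.
Variable F : finFieldType.

Lemma prod_XsubC_dvd_finField (s : seq F) :
  uniq s -> \prod_(x <- s) ('X - x%:P) %| 'X^#|F| - 'X.
Proof.
move=> us; have roots_s : all (root ('X^#|F| - 'X)) s.
  by apply/allP=> x _; rewrite rootE !hornerE expf_card subrr.
have [c ->] := uniq_roots_prod_XsubC roots_s (etrans (uniq_rootsE s) us).
exact: dvdp_mull.
Qed.

Lemma potent_of_kerprod_rows n (D : 'M[F]_n.+1) :
  (forall i, exists2 s, uniq s & ((delta_mx 0 i : 'rV_n.+1) <= kerprod D s)%MS) ->
  mxpow D #|F| = D.
Proof.
move=> rows_ker; have: (1%:M <= kermxpoly D ('X^#|F| - 'X))%MS.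
  apply/row_subP=> i; have [s us ei_ker] := rows_ker i.
  by rewrite rowE mulmx1 (submx_trans ei_ker) ?kermxpoly_dvdp ?prod_XsubC_dvd_finField.
rewrite /kermxpoly => /sub_kermxP; rewrite mul1mx rmorphB rmorphXn /= horner_mx_X.
by rewrite mxpowE => /eqP; rewrite subr_eq0 => /eqP.
Qed.

Variables (k' : nat) (d : nat -> F) (w : 'rV[F]_k'.+1).
Local Notation k := k'.+1.
Local Notation e i := (delta_mx 0 i : 'rV[F]_k).
Local Notation D := (hessmx d w - nilmx w).
Local Notation wl := (w 0 ord_max).

Lemma potent_part_odd_size (a b : F) :
  ~~ odd k' -> a != b -> wl \notin [:: a; b] ->
  (forall i, (i < k')%N -> d i = if odd i then b else a) ->
  mxpow D #|F| = D.
Proof.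
move=> ek ab wab dE.
have rows_ab (i : 'I_k) : (i < k')%N -> (e i <= kerprod D [:: a; b])%MS.
  move=> ik; have := potent_part_sub_diag d w ik; rewrite dE //.
  case: ifP => oi eiD; first by apply/sub_kerprod_cons/kerprod_cons; rewrite eiD sub0mx.
  have i1k : (i.+1 < k')%N.
    by rewrite ltn_neqAle ik andbT; apply: contraNneq ek => <-; rewrite /= oi.
  apply: kerprod_cons; rewrite eiD; apply: kerprod_cons.
  have := potent_part_sub_diag d w (i := inord i.+1); rewrite inordK // dE //= oi => -> //.
  exact: sub0mx.
apply: potent_of_kerprod_rows => i; have [->|/ord_lt_max ik] := eqVneq i ord_max.
  exists [:: wl; a; b]; first by rewrite /= wab inE ab.
  apply: kerprod_cons; rewrite potent_part_sub_last; apply: kerprod_comb => j.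
  rewrite mxE (negPf ek) orbF; have [_|/ord_lt_max jk] := eqVneq j ord_max; first by left.
  by right; apply: rows_ab.
by exists [:: a; b]; [rewrite /= inE ab | apply: rows_ab].
Qed.

Lemma potent_part_even_size (b : F) :
  odd k' -> wl != b -> d k'.-1 != wl ->
  (forall i, (i < k')%N -> if odd i then d i = b else d i != b) ->
  mxpow D #|F| = D.
Proof.
move=> ok wb dw dE.
have row_odd (i : 'I_k) : (i < k')%N -> odd i -> (e i <= kerprod D [:: b])%MS.
  move=> ik oi; have := dE i ik; rewrite oi => dib; apply: kerprod_cons.
  by rewrite -dib potent_part_sub_diag // oi sub0mx.
have row_last : (e ord_max <= kerprod D [:: wl; b])%MS.
  apply: kerprod_cons; rewrite potent_part_sub_last; apply: kerprod_comb => j.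
  rewrite mxE ok /=; have [_|/ord_lt_max jk] := eqVneq j ord_max; first by left.
  by case: (boolP (odd j)) => oj; [right; apply: row_odd | left].
apply: potent_of_kerprod_rows => i; have [->|/ord_lt_max ik] := eqVneq i ord_max.
  by exists [:: wl; b]; rewrite //= inE wb.
have := dE i ik; case: ifP => oi dib; first by exists [:: b]; last apply: row_odd.
have := potent_part_sub_diag d w ik; rewrite oi => eiD.
have [i1k|i1k] := eqVneq i.+1 k'.
  exists [:: d i; wl; b].
    rewrite /= !inE negb_or dib wb !andbT.
    by have -> : (i : nat) = k'.-1 := congr1 predn i1k.
  apply: kerprod_cons; rewrite eiD.
  by have -> : inord i.+1 = ord_max :> 'I_k by apply/val_inj; rewrite /= inordK i1k.
exists [:: d i; b]; first by rewrite /= inE dib.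
apply: kerprod_cons; rewrite eiD; apply: row_odd; rewrite inordK //=.
  by rewrite ltn_neqAle i1k.
by rewrite oi.
Qed.

End PotentCriterion.

Section Characteristic2.
Variables (F : finFieldType) (char2 : 2 \in [pchar F]) (card4 : (4 <= #|F|)%N).

Lemma sqrt_pchar2 (x : F) : exists s, s ^+ 2 = x.
Proof.
have [g frobK gK] := injF_bij (fmorph_inj (pFrobenius_aut char2)).
by exists (g x); rewrite -pFrobenius_autE gK.
Qed.

Lemma exists_notin (s : seq F) : (size s < 4)%N -> exists x, x \notin s.
Proof.
move=> s4; have [x sx|s_all] := pickP (fun x => x \notin s); first by exists x.
suff: (#|F| <= size s)%N by rewrite leqNgt (leq_trans s4 card4).
apply: leq_trans (card_size s); apply: subset_leq_card; apply/subsetP=> x _.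
by have := s_all x; rewrite /= => /negbFE.
Qed.

Lemma mulrn_pchar2 (x : F) r : x *+ r = if odd r then x else 0.
Proof.
elim: r => [|r IHr]; rewrite ?mulr0n // mulrS IHr /=.
by case: (odd r); rewrite ?(addrr_pchar2 char2) ?addr0.
Qed.

Lemma sum_alternating (a b : F) r :
  \sum_(i < r.*2) (if odd i then b else a) = if odd r then a + b else 0.
Proof.
rewrite -mulrn_pchar2; elim: r => [|r IHr]; first by rewrite big_ord0.
by rewrite doubleS !big_ord_recr /= IHr odd_double /= mulrS -addrA addrC.
Qed.

Lemma eq_addr_pchar2 (x y z : F) : (x + y == z) = (x == z + y).
Proof. by rewrite -subr_eq (oppr_pchar2 char2). Qed.

Lemma notin_pair_add_pchar2 (t a b : F) (c : bool) :
  t \notin [:: a; b] -> t + (if c then a + b else 0) \notin [:: a; b].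
Proof.
case: c; rewrite ?addr0 // !inE !eq_addr_pchar2 addrA (addrr_pchar2 char2) add0r.
by rewrite addrCA (addrr_pchar2 char2) addr0 orbC.
Qed.

Lemma hessmx_last_pchar2 k' d (w : 'rV[F]_k'.+1) t :
  \tr (hessmx d w) = t -> w 0 ord_max = t + \sum_(i < k') d i.
Proof. by rewrite mxtrace_hessmx => <-; rewrite addrC addrA (addrr_pchar2 char2) add0r. Qed.

Lemma hessmx_trace0_sqz_potent (w : 'rV[F]_2) :
  w 0 ord_max = 0 -> sqz_potent #|F| (hessmx (fun=> 0) w).
Proof.
move=> w1; have [s s2] := sqrt_pchar2 (w 0 0).
have -> : w = \row_j (s ^+ 2 * (j == 0 :> nat)%:R).
  apply/rowP=> -[[|[|//]] j2]; rewrite mxE /= ?mulr1 ?mulr0 ?s2 -?w1;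
  by congr (w 0 _); apply: val_inj.
set H := hessmx _ _; have HH : H *m H = (s ^+ 2)%:M.
  apply/matrixP=> -[[|[|//]] ?] [[|[|//]] ?]; rewrite !mxE !big_ord_recl big_ord0 !mxE /=;
  by rewrite ?(mul0r, mulr0, mul1r, mulr1, add0r, addr0, mulr0n, mulr1n).
exists (H + s%:M), (- s%:M); split; first by rewrite addrK.
  rewrite mulmxDl !mulmxDr HH mul_mx_scalar mul_scalar_mx -scalar_mxM -expr2.
  rewrite [s *: H + _]addrC addrACA -raddfD -scalerDl !(addrr_pchar2 char2) scale0r addr0.
  exact: raddf0.
by rewrite mxpowE -scalemx1 -scaleNr exprZn expr1n -(oppr_pchar2 char2 s) expf_card.
Qed.

Lemma hessmx_sqz_potent_odd_size k' t : ~~ odd k' ->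
  exists d, forall w : 'rV[F]_k'.+1,
    \tr (hessmx d w) = t -> sqz_potent #|F| (hessmx d w).
Proof.
move=> ek; have [a ta] := exists_notin (s := [:: t]) isT.
have [b tab] := exists_notin (s := [:: t; a]) isT.
move: ta tab; rewrite !inE !negb_or => ta /andP[tb ab].
exists (fun i => if odd i then b else a) => w /hessmx_last_pchar2 wlE.
apply/hessmx_sqz_potent/(potent_part_odd_size (a := a) (b := b)) => //.
  by rewrite eq_sym.
rewrite wlE -(odd_double_half k') (negPf ek) sum_alternating.
by apply: notin_pair_add_pchar2; rewrite !inE negb_or eq_sym ta eq_sym tb.
Qed.

Lemma hessmx_sqz_potent_even_size k' t : odd k' -> ~~ ((k' == 1%N) && (t == 0)) ->
  exists d, forall w : 'rV[F]_k'.+1,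
    \tr (hessmx d w) = t -> sqz_potent #|F| (hessmx d w).
Proof.
move=> ok not_special; have k'E := odd_double_half k'; rewrite ok in k'E.
set r := k'./2 in k'E.
have [y yt] := exists_notin (s := [:: t]) isT.
have [b byt] := exists_notin (s := [:: 0; t; y]) isT.
move: yt byt; rewrite !inE !negb_or => yt /and3P[b0 bt yb].
pose d i := if i == 0%N then 0 else if odd i then b else y.
have dE i : (i < k')%N -> if odd i then d i = b else d i != b.
  case: i => [|i] _; rewrite /d /=; first by rewrite eq_sym.
  by case: (odd i); rewrite //= eq_sym.
exists d => w /hessmx_last_pchar2 wlE.
have {}wlE : w 0 ord_max = t + if odd r then b + y else 0.
  rewrite wlE -k'E big_ord_recl add0r -sum_alternating.
  by congr (_ + _); apply: eq_bigr => i _; rewrite /d /=; case: (odd i).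
have [dk wb] : d k'.-1 != w 0 ord_max /\ w 0 ord_max != b.
  have [r0|r_gt0] := posnP r.
    move: not_special; rewrite wlE -k'E r0 addr0 /d /= => t0.
    by split; rewrite eq_sym.
  have : w 0 ord_max \notin [:: b; y].
    by rewrite wlE notin_pair_add_pchar2 // !inE negb_or !(eq_sym t) bt.
  rewrite !inE negb_or => /andP[wb wy]; split=> //.
  have -> : k'.-1 = r.*2 by rewrite -k'E.
  by rewrite /d odd_double double_eq0 (gtn_eqF r_gt0) eq_sym.
exact/hessmx_sqz_potent/(potent_part_even_size ok wb dk dE).
Qed.

Lemma hessmx_sqz_potent_trace k' t :
  exists d, forall w : 'rV[F]_k'.+1,
    \tr (hessmx d w) = t -> sqz_potent #|F| (hessmx d w).
Proof.
have [ok|ek] := boolP (odd k'); last exact: hessmx_sqz_potent_odd_size.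
have [/andP[/eqP k1 /eqP t0]|] := boolP ((k' == 1%N) && (t == 0)).
  subst k'; exists (fun=> 0) => w /hessmx_last_pchar2 wlE.
  by apply: hessmx_trace0_sqz_potent; rewrite wlE big1 ?addr0.
exact: hessmx_sqz_potent_even_size.
Qed.

Lemma cyclic_sqz_potent k' (C : 'M[F]_k'.+1) u :
  row_free (krylovmx C u k'.+1) -> sqz_potent #|F| C.
Proof.
move=> Kfree; have [d hessP] := hessmx_sqz_potent_trace k' (\tr C).
have [w [T [Tunit TC]]] := hessmx_similar d Kfree.
apply: (sqz_potent_conj _ _ TC); rewrite ?row_free_unit ?row_full_unit //.
apply: hessP; rewrite -(mulmxK Tunit (hessmx d w)) -TC -mulmxA mxtrace_mulC.
by rewrite mulmxKV.
Qed.

Lemma sqz_potent_pchar2 n (A : 'M[F]_n) : sqz_potent #|F| A.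
Proof.
elim/cyclic_decomposition_ind: n / A => [A|k' C u|m n B C|m n P A B].
- exact: sqz_potent0.
- exact: cyclic_sqz_potent.
- exact: sqz_potent_block.
- exact: sqz_potent_conj.
Qed.

End Characteristic2.

Theorem corollary3p2 (F : finFieldType) (m : nat) (hm : (2 <= m)%N)
  (hcard : #|F| = (2 ^ m)%N) (n : nat) (A : 'M[F]_n) :
  exists N D : 'M[F]_n,
    [/\ A = N + D, N *m N = 0 & mxpow D (2 ^ m) = D].
Proof.
have char2 : 2 \in [pchar F] by apply: (card_finPcharP hcard).
have card4 : (4 <= #|F|)%N by rewrite hcard (leq_pexp2l (isT : (0 < 2)%N) hm).
by rewrite -hcard; apply: sqz_potent_pchar2.
Qed.
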